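(* Let $K$ be an algebraically closed field of characteristic zero, $\deg_1$ the standard homogeneous degree on $K[x_1,\dots,x_n]$, $\Phi=(f_1,\dots,f_n)$ a polynomial automorphism of $K^n$, $d_i=\deg_1(f_i)$, $\deg_2$ the weighted degree with weights $d_i$ on $x_i$, $\nabla=d_1+\dots+d_n-n$, and assume the ideal $I=\{Q:Q(\overline{f_1},\dots,\overline{f_n})=0\}$ equals $(R)$ for an irreducible $R$ with $\frac{\partial R}{\partial x_n}\ne0$. Let $P$ be a nonzero polynomial and $k\in\mathbb{N}$ with $\tilde P\in(R^k)\setminus(R^{k+1})$. Then: (i) $\deg_1(\frac{\partial^kP}{\partial x_n^k}\circ\Phi)=\deg_2(\frac{\partial^kP}{\partial x_n^k})=\deg_2(P)-kd_n$; (ii) $\deg_1(P\circ\Phi)\ge\deg_2(P)-k\nabla$; (iii) $\deg_1(P\circ\Phi)\ge k(\deg_2(R)-\nabla)$.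
   Context: $\overline{f}$ denotes the homogeneous component of highest degree of $f$ and $\tilde P$ the leading term of $P$ with respect to $\deg_2$. *)

From HB Require Import structures.
From mathcomp Require Import all_boot all_order all_algebra.
From mathcomp.multinomials Require Import mpoly.
Set Implicit Arguments. Unset Strict Implicit. Unset Printing Implicit Defensive.
Import Order.TTheory GRing.Theory Num.Theory.
Local Open Scope ring_scope.

Section Defs.
Variables (n : nat) (K : fieldType).

(* deg_1 : standard total degree (0 for the zero polynomial) *)
Definition deg1 (p : {mpoly K[n]}) : nat := (msize p).-1.

Definition hbar (p : {mpoly K[n]}) : {mpoly K[n]} :=
  \sum_(m <- msupp p | mdeg m == deg1 p) p@_m *: 'X_[m].

Definition wdeg (w : 'I_n -> nat) (m : 'X_{1..n}) : nat :=
  (\sum_(i < n) m i * w i)%N.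

(* weighted degree of a polynomial (0 for the zero polynomial) *)
Definition wdegp (w : 'I_n -> nat) (p : {mpoly K[n]}) : nat :=
  (\max_(m <- msupp p) wdeg w m)%N.

Definition wtop (w : 'I_n -> nat) (p : {mpoly K[n]}) : {mpoly K[n]} :=
  \sum_(m <- msupp p | wdeg w m == wdegp w p) p@_m *: 'X_[m].

Definition in_pideal (A B : {mpoly K[n]}) : Prop := exists S, B = A * S.

(* irreducible: non-constant, and every factorization has a constant
   (= unit, as the product is nonzero) factor *)
Definition mirreducible (R : {mpoly K[n]}) : Prop :=
  (1 < msize R)%N /\
  forall A B : {mpoly K[n]}, R = A * B -> (msize A <= 1)%N \/ (msize B <= 1)%N.

Definition poly_automorphism (Phi : n.-tuple {mpoly K[n]}) : Prop :=
  exists Psi : n.-tuple {mpoly K[n]},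
    (forall i : 'I_n, tnth Phi i \mPo Psi = 'X_i) /\
    (forall i : 'I_n, tnth Psi i \mPo Phi = 'X_i).

End Defs.

(** Write T for the k-th x_n-derivative of the d-weighted top form
    [wtop d P = R^k S], where R does not divide S.  By Leibniz,
    T = c (dR/dx_n)^k S + R U with c <> 0; since R generates the kernel of
    evaluation at the leading forms of Phi, it is prime, and it does not divide
    its derivative, so T does not vanish at the leading forms.  As T is the top
    form of the k-th derivative of P, no cancellation occurs when composing
    with Phi, which is (i).  For (ii), the Jacobian determinant of Phi with its
    last component replaced by Q o Phi is (dQ/dx_n o Phi) times the nonzero
    Jacobian of Phi; bounding its degree row by row gives
    deg (Q o Phi) >= deg (dQ/dx_n o Phi) + d_n - nabla, which is iterated k
    times starting from (i).  Finally (iii) follows from deg_2 P >= k deg_2 R. *)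

From HB Require Import structures.
From mathcomp Require Import all_boot all_order all_algebra.
From mathcomp.multinomials Require Import mpoly.
From mathcomp Require Import zify ring.
Import Order.TTheory GRing.Theory Num.Theory.
Local Open Scope ring_scope.
Set Implicit Arguments. Unset Strict Implicit. Unset Printing Implicit Defensive.

Local Notation w1 := (fun=> 1%N).

Lemma bigmax_seq_attained (T : eqType) (s : seq T) (F : T -> nat) x0 :
  x0 \in s -> exists2 x, x \in s & (\max_(y <- s) F y)%N = F x.
Proof.
move=> sx0; have s_gt0 : (0 < #|'I_(size s)|)%N by rewrite card_ord; case: s sx0.
rewrite (big_nth x0) big_mkord.
have [j ->] := bigop.eq_bigmax (fun j : 'I_(size s) => F (nth x0 s j)) s_gt0.
by exists (nth x0 s j); rewrite ?mem_nth.
Qed.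

Section WeightedParts.
Variables (n : nat) (K : fieldType).
Implicit Types (p q : {mpoly K[n]}) (w : 'I_n -> nat).

Definition wpart w D p : {mpoly K[n]} :=
  \sum_(m <- msupp p | wdeg w m == D) p@_m *: 'X_[m].

Definition wbounded w D p := forall m, m \in msupp p -> (wdeg w m <= D)%N.

Lemma wdeg0 w : wdeg w 0%MM = 0%N.
Proof. by rewrite /wdeg big1 // => i _; rewrite mnm0E. Qed.

Lemma wdegD w m1 m2 : wdeg w (m1 + m2) = (wdeg w m1 + wdeg w m2)%N.
Proof. by rewrite /wdeg -big_split; apply: eq_bigr => i _; rewrite mnmDE mulnDl. Qed.

Lemma wdegU w i : wdeg w U_(i)%MM = w i.
Proof.
rewrite /wdeg (bigD1 i) //= mnm1E eqxx mul1n big1 ?addn0 // => j /negbTE ji.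
by rewrite mnm1E eq_sym ji.
Qed.

Lemma mcoeff_wpart w D p m :
  (wpart w D p)@_m = if wdeg w m == D then p@_m else 0.
Proof.
rewrite /wpart raddf_sum /=; under eq_bigr do rewrite mcoeffZ mcoeffX.
have [pm | /memN_msupp_eq0 pm0] := boolP (m \in msupp p).
  rewrite big_mkcond (bigD1_seq m) ?msupp_uniq //= eqxx mulr1 big1 ?addr0.
    by case: ifP.
  by move=> m' /negbTE m'm; case: ifP => // _; rewrite m'm mulr0.
rewrite big1; first by case: ifP; rewrite ?pm0.
by move=> m' _; case: (m' =P m) => [->|_]; rewrite ?pm0 ?mul0r ?mulr0.
Qed.

Lemma wpart0 w D : wpart w D 0 = 0.
Proof. by apply/mpolyP => m; rewrite mcoeff_wpart mcoeff0; case: ifP. Qed.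

Lemma wpartD w D p q : wpart w D (p + q) = wpart w D p + wpart w D q.
Proof.
by apply/mpolyP => m; rewrite mcoeffD !mcoeff_wpart mcoeffD; case: ifP; rewrite ?addr0.
Qed.

Lemma wpartZ w D c p : wpart w D (c *: p) = c *: wpart w D p.
Proof.
by apply/mpolyP => m; rewrite mcoeffZ !mcoeff_wpart mcoeffZ; case: ifP; rewrite ?mulr0.
Qed.

Lemma wpart_sum w D (I : Type) (r : seq I) (P : pred I) (F : I -> {mpoly K[n]}) :
  wpart w D (\sum_(i <- r | P i) F i) = \sum_(i <- r | P i) wpart w D (F i).
Proof. exact: (big_morph _ (wpartD w D) (wpart0 w D)). Qed.

Lemma wpartZX w D c m :
  wpart w D (c *: 'X_[m]) = if wdeg w m == D then c *: 'X_[m] else 0.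
Proof.
apply/mpolyP => m'; rewrite mcoeff_wpart.
case: (m =P m') => [<-|/eqP mm']; first by case: ifP; rewrite ?mcoeff0.
rewrite mcoeffZ mcoeffX (negbTE mm') mulr0 if_same.
by case: ifP; rewrite ?mcoeff0 // mcoeffZ mcoeffX (negbTE mm') mulr0.
Qed.

Lemma wpart1 w : wpart w 0 1 = 1.
Proof.
apply/mpolyP => m; rewrite mcoeff_wpart mcoeff1.
by case: (m =P 0%MM) => [->|_]; rewrite ?wdeg0 ?eqxx //; case: ifP.
Qed.

Lemma wpart_neq0P w D p :
  wpart w D p != 0 -> exists2 m, m \in msupp p & wdeg w m = D.
Proof.
rewrite -msupp_eq0; case E: (msupp _) => [//|m s] _.
have := mem_head m s; rewrite -E mcoeff_msupp mcoeff_wpart.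
by case: (wdeg w m =P D) => [mD|_]; rewrite ?eqxx // -mcoeff_msupp => pm; exists m.
Qed.

Lemma wbounded0 w D : wbounded w D 0.
Proof. by move=> m; rewrite msupp0. Qed.

Lemma wbounded1 w : wbounded w 0 1.
Proof. by move=> m; rewrite msupp1 inE => /eqP ->; rewrite wdeg0. Qed.

Lemma wboundedW w D E p : (D <= E)%N -> wbounded w D p -> wbounded w E p.
Proof. by move=> DE pD m /pD /leq_trans; apply. Qed.

Lemma wboundedD w D p q : wbounded w D p -> wbounded w D q -> wbounded w D (p + q).
Proof. by move=> pD qD m /msuppD_le; rewrite mem_cat => /orP[/pD|/qD]. Qed.

Lemma wboundedZ w D c p : wbounded w D p -> wbounded w D (c *: p).
Proof. by move=> pD m /msuppZ_le /pD. Qed.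

Lemma wboundedN w D p : wbounded w D p -> wbounded w D (- p).
Proof. by move=> pD m; rewrite (perm_mem (msuppN p)) => /pD. Qed.

Lemma wbounded_sum w D (I : Type) (r : seq I) (P : pred I) (F : I -> {mpoly K[n]}) :
  (forall i, P i -> wbounded w D (F i)) -> wbounded w D (\sum_(i <- r | P i) F i).
Proof.
move=> FD; elim/big_rec: _ => [|i q Pi qD]; first exact: wbounded0.
exact: wboundedD (FD _ Pi) qD.
Qed.

Lemma wboundedM w D E p q :
  wbounded w D p -> wbounded w E q -> wbounded w (D + E)%N (p * q).
Proof.
move=> pD qE m /msuppM_le /allpairsP[[m1 m2] /= [pm1 qm2 ->]].
by rewrite wdegD leq_add ?pD ?qE.
Qed.

Lemma wpart_small w D E p : wbounded w D p -> (D < E)%N -> wpart w E p = 0.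
Proof.
move=> pD DE; apply/mpolyP => m; rewrite mcoeff_wpart mcoeff0.
case: eqP => // mE; have [/pD|/memN_msupp_eq0 //] := boolP (m \in msupp p).
by rewrite mE leqNgt DE.
Qed.

Lemma wpartM w D E p q : wbounded w D p -> wbounded w E q ->
  wpart w (D + E)%N (p * q) = wpart w D p * wpart w E q.
Proof.
move=> pD qE; rewrite [in LHS](mpolyE p) [in LHS](mpolyE q) [in RHS](mpolyE p).
rewrite [in RHS](mpolyE q) !wpart_sum !mulr_suml wpart_sum.
apply: eq_big_seq => m1 pm1; rewrite !mulr_sumr wpart_sum.
apply: eq_big_seq => m2 qm2; rewrite -scalerAl -scalerAr scalerA -mpolyXD !wpartZX wdegD.
have := pD _ pm1; have := qE _ qm2.
case: (wdeg w m1 =P D) => [->|m1D]; case: (wdeg w m2 =P E) => [->|m2E] m2_le m1_le;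
  rewrite ?eqxx ?mul0r ?mulr0 //; first by rewrite -scalerAl -scalerAr scalerA mpolyXD.
all: by case: eqP => // ?; exfalso; lia.
Qed.

Lemma wbounded_prod w (I : Type) (r : seq I) (F : I -> {mpoly K[n]}) (D : I -> nat) :
  (forall i, wbounded w (D i) (F i)) ->
  wbounded w (\sum_(i <- r) D i) (\prod_(i <- r) F i).
Proof.
move=> FD; elim: r => [|i r IH]; rewrite ?big_nil ?big_cons; first exact: wbounded1.
exact: wboundedM.
Qed.

Lemma wpart_prod w (I : Type) (r : seq I) (F : I -> {mpoly K[n]}) (D : I -> nat) :
  (forall i, wbounded w (D i) (F i)) ->
  wpart w (\sum_(i <- r) D i) (\prod_(i <- r) F i) = \prod_(i <- r) wpart w (D i) (F i).
Proof.
move=> FD; elim: r => [|i r IH]; rewrite ?big_nil ?big_cons; first exact: wpart1.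
by rewrite wpartM ?IH //; apply: wbounded_prod.
Qed.

Lemma wbounded_exp w D e p : wbounded w D p -> wbounded w (D * e)%N (p ^+ e).
Proof.
move=> pD; elim: e => [|e IH]; first by rewrite muln0 expr0; apply: wbounded1.
by rewrite mulnS exprS; apply: wboundedM.
Qed.

Lemma wpart_exp w D e p : wbounded w D p -> wpart w (D * e)%N (p ^+ e) = wpart w D p ^+ e.
Proof.
move=> pD; elim: e => [|e IH]; first by rewrite muln0 !expr0 wpart1.
by rewrite mulnS !exprS wpartM ?IH //; apply: wbounded_exp.
Qed.

Lemma wbounded_wdegp w p : wbounded w (wdegp w p) p.
Proof. by move=> m pm; apply: (leq_bigmax_seq m pm). Qed.

Lemma wdegp_le w D p : wbounded w D p -> (wdegp w p <= D)%N.
Proof. by move=> pD; apply/bigmax_leqP_seq => m pm _; apply: pD. Qed.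

Lemma wdegp_ge w D p : wpart w D p != 0 -> (D <= wdegp w p)%N.
Proof. by case/wpart_neq0P => m pm <-; apply: (leq_bigmax_seq m pm). Qed.

Lemma wtopE w p : wtop w p = wpart w (wdegp w p) p.
Proof. by []. Qed.

Lemma wtop_neq0 w p : p != 0 -> wtop w p != 0.
Proof.
rewrite -msupp_eq0; case E: (msupp p) => [//|m0 s] _.
have [m pm wm] := bigmax_seq_attained (wdeg w) (mem_head m0 s).
rewrite -E in pm wm; apply/eqP => /mpolyP /(_ m) /eqP.
rewrite wtopE mcoeff_wpart /wdegp wm eqxx mcoeff0 => /eqP pm0.
by move: pm; rewrite mcoeff_msupp pm0 eqxx.
Qed.

Lemma wdegp_wtop_le w p : (wdegp w (wtop w p) <= wdegp w p)%N.
Proof.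
apply: wdegp_le => m; rewrite wtopE mcoeff_msupp mcoeff_wpart.
by case: (wdeg w m =P wdegp w p) => [->|_]; rewrite ?eqxx.
Qed.

Lemma wdegpM_ge w p q :
  p != 0 -> q != 0 -> (wdegp w p + wdegp w q <= wdegp w (p * q))%N.
Proof.
move=> p0 q0; apply: wdegp_ge.
by rewrite wpartM ?mulf_neq0 ?wtop_neq0 //; apply: wbounded_wdegp.
Qed.

Lemma wdegp_exprM_ge w k p q : p != 0 -> q != 0 ->
  (k * wdegp w p + wdegp w q <= wdegp w (p ^+ k * q))%N.
Proof.
move=> p0 q0; elim: k => [|k IH]; first by rewrite expr0 mul1r.
rewrite exprS -mulrA; apply: leq_trans (wdegpM_ge _ _ _) => //.
  by rewrite mulSn -addnA leq_add2l.
by rewrite mulf_neq0 // expf_neq0.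
Qed.

Lemma wdegp_in_pideal_exp w k R p : p != 0 -> in_pideal (R ^+ k) p ->
  (k * wdegp w R <= wdegp w p)%N.
Proof.
move=> p0 [S defp]; case: k defp => [//|k] defp.
move: p0; rewrite defp mulf_eq0 negb_or => /andP[Rk0 S0].
have R0 : R != 0 by apply: contraNneq Rk0 => ->; rewrite expr0n.
exact: leq_trans (leq_addr _ _) (wdegp_exprM_ge w k.+1 R0 S0).
Qed.

End WeightedParts.

Section TotalDegree.
Variables (n : nat) (K : fieldType).
Implicit Types (p q : {mpoly K[n]}).

Lemma wdeg1 (m : 'X_{1..n}) : wdeg w1 m = mdeg m.
Proof. by rewrite /wdeg mdegE; apply: eq_bigr => i _; rewrite muln1. Qed.

Lemma hbarE p : hbar p = wpart w1 (deg1 p) p.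
Proof. by apply: eq_bigl => m; rewrite wdeg1. Qed.

Lemma wbounded_deg1 p : wbounded w1 (deg1 p) p.
Proof. by move=> m /msize_mdeg_lt; rewrite wdeg1 /deg1; case: (msize p). Qed.

Lemma deg1_le D p : wbounded w1 D p -> (deg1 p <= D)%N.
Proof.
move=> pD; rewrite /deg1 msizeE.
suff : (\max_(m <- msupp p) (mdeg m).+1 <= D.+1)%N by case: (\max_(_ <- _) _).
by apply/bigmax_leqP_seq => m pm _; rewrite ltnS -wdeg1 pD.
Qed.

Lemma deg1_ge D p : wpart w1 D p != 0 -> (D <= deg1 p)%N.
Proof.
case/wpart_neq0P => m /msize_mdeg_lt; rewrite wdeg1 /deg1 => + <-.
by case: (msize p).
Qed.

Lemma deg1_mulr_ge p q : q != 0 -> (deg1 p <= deg1 (p * q))%N.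
Proof.
move=> q0; have [->|p0] := eqVneq p 0; first by rewrite /deg1 msize0.
rewrite /deg1 msizeM //; have : (0 < msize q)%N by rewrite lt0n msize_poly_eq0.
by move: (msize p) (msize q) => a b; lia.
Qed.

End TotalDegree.

Section WeightedDerivative.
Variables (n : nat) (K : fieldType) (w : 'I_n -> nat) (i : 'I_n).
Implicit Types (p q : {mpoly K[n]}).

Lemma msupp_mderiv p m : m \in msupp p^`M(i) -> (m + U_(i))%MM \in msupp p.
Proof. by rewrite !mcoeff_msupp mcoeff_mderiv; apply: contra => /eqP ->; rewrite mul0rn. Qed.

Lemma mderiv_wpart D p : (wpart w (D + w i)%N p)^`M(i) = wpart w D p^`M(i).
Proof.
apply/mpolyP => m; rewrite mcoeff_mderiv !mcoeff_wpart mcoeff_mderiv.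
by rewrite wdegD wdegU eqn_add2r; case: ifP; rewrite ?mul0rn.
Qed.

Lemma mderiv_wpart_small D p : (D < w i)%N -> (wpart w D p)^`M(i) = 0.
Proof.
move=> Dwi; apply/mpolyP => m; rewrite mcoeff_mderiv mcoeff_wpart mcoeff0 wdegD wdegU.
by case: eqP => [Dm|_]; rewrite ?mul0rn //; move: Dwi; rewrite -Dm ltnNge leq_addl.
Qed.

Lemma wbounded_mderiv D p : wbounded w (D + w i)%N p -> wbounded w D p^`M(i).
Proof. by move=> pD m /msupp_mderiv /pD; rewrite wdegD wdegU leq_add2r. Qed.

Lemma mderivn_wpart k D p : (wpart w (D + k * w i)%N p)^`M(i, k) = wpart w D p^`M(i, k).
Proof.
elim: k D p => [|k IH] D p; first by rewrite mul0n addn0 !mderivn0.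
by rewrite !mderivSn mulSn addnA addnAC mderiv_wpart IH.
Qed.

Lemma wbounded_mderivn k D p : wbounded w (D + k * w i)%N p -> wbounded w D p^`M(i, k).
Proof.
elim: k D p => [|k IH] D p; first by rewrite mul0n addn0 mderivn0.
by rewrite mderivSn mulSn addnA addnAC => /wbounded_mderiv /IH.
Qed.

Lemma mderivn_wpart_small k D p : (D < k * w i)%N -> (wpart w D p)^`M(i, k) = 0.
Proof.
elim: k D p => [//|k IH] D p; rewrite mderivSn.
have [Dwi _|wiD] := ltnP D (w i); first by rewrite mderiv_wpart_small // linear0.
by rewrite -(subnK wiD) mderiv_wpart mulSn => Dk; apply: IH; lia.
Qed.

Lemma wtop_mderivn k p : (wtop w p)^`M(i, k) != 0 ->
  (wdegp w p^`M(i, k) + k * w i = wdegp w p)%N /\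
  wtop w p^`M(i, k) = (wtop w p)^`M(i, k).
Proof.
move=> top_k0.
have [E defD] : exists E, wdegp w p = (E + k * w i)%N.
  exists (wdegp w p - k * w i)%N; rewrite subnK // leqNgt; apply/negP => lt.
  by move: top_k0; rewrite wtopE mderivn_wpart_small ?eqxx.
have partE : wpart w E p^`M(i, k) = (wtop w p)^`M(i, k).
  by rewrite wtopE defD mderivn_wpart.
have degE : wdegp w p^`M(i, k) = E.
  apply/eqP; rewrite eqn_leq wdegp_le ?wdegp_ge ?partE //.
  by apply: wbounded_mderivn; rewrite -defD; apply: wbounded_wdegp.
by rewrite wtopE degE partE defD.
Qed.

Lemma msize_mderiv p : (msize p^`M(i) <= (msize p).-1)%N.
Proof.
rewrite [X in (X <= _)%N]msizeE; apply/bigmax_leqP_seq => m /msupp_mderiv pm _.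
by move: (msize_mdeg_lt pm); rewrite mdegD mdeg1 addn1; case: (msize p).
Qed.

Lemma wbounded_deg1_mderiv p : wbounded w1 (deg1 p).-1 p^`M(i).
Proof.
move=> m /msupp_mderiv /msize_mdeg_lt; rewrite wdeg1 mdegD mdeg1 addn1 /deg1.
by case: (msize p) => [|[|s]].
Qed.

Lemma mderiv_deg1_eq0 p : deg1 p = 0%N -> p^`M(i) = 0.
Proof.
move=> p_const; apply/eqP; rewrite -msize_poly_eq0 -leqn0.
by apply: leq_trans (msize_mderiv p) _; move: p_const; rewrite /deg1 => ->.
Qed.

End WeightedDerivative.

Section Composition.
Variables (n : nat) (K : fieldType) (Phi : n.-tuple {mpoly K[n]}).
Implicit Types (Q : {mpoly K[n]}).
Local Notation d := (fun i : 'I_n => deg1 (tnth Phi i)).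
Local Notation Phibar := [tuple hbar (tnth Phi i) | i < n].

Lemma wdeg_sum_mul m : wdeg d m = (\sum_(i < n) d i * m i)%N.
Proof. by apply: eq_bigr => i _; rewrite mulnC. Qed.

Lemma wbounded_comp_mpolyX m : wbounded w1 (wdeg d m) ('X_[m] \mPo Phi).
Proof.
rewrite wdeg_sum_mul comp_mpolyX; apply: wbounded_prod => i.
exact/wbounded_exp/wbounded_deg1.
Qed.

Lemma wpart_comp_mpolyX m : wpart w1 (wdeg d m) ('X_[m] \mPo Phi) = 'X_[m] \mPo Phibar.
Proof.
rewrite wdeg_sum_mul !comp_mpolyX wpart_prod => [|i]; last exact/wbounded_exp/wbounded_deg1.
apply: eq_bigr => i _; rewrite wpart_exp; last exact: wbounded_deg1.
by rewrite tnth_mktuple hbarE.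
Qed.

Lemma wbounded_comp Q : wbounded w1 (wdegp d Q) (Q \mPo Phi).
Proof.
rewrite comp_mpolyEX big_seq; apply: wbounded_sum => m Qm; apply: wboundedZ.
exact: (wboundedW (@wbounded_wdegp _ _ d Q m Qm) (@wbounded_comp_mpolyX m)).
Qed.

Lemma wpart_comp Q : wpart w1 (wdegp d Q) (Q \mPo Phi) = wtop d Q \mPo Phibar.
Proof.
rewrite comp_mpolyEX wpart_sum /wtop raddf_sum /= [RHS]big_mkcond /=.
apply: eq_big_seq => m Qm; rewrite wpartZ.
case: eqP => [<-|mQ]; first by rewrite wpart_comp_mpolyX comp_mpolyZ.
rewrite (wpart_small (@wbounded_comp_mpolyX m)) ?scaler0 //.
by rewrite ltn_neqAle wbounded_wdegp // andbT; apply/eqP.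
Qed.

Lemma comp_mpoly_neq0 Q : wtop d Q \mPo Phibar != 0 -> Q \mPo Phi != 0.
Proof. by rewrite -wpart_comp; apply: contraNneq => ->; rewrite wpart0. Qed.

Lemma deg1_comp Q : wtop d Q \mPo Phibar != 0 -> deg1 (Q \mPo Phi) = wdegp d Q.
Proof.
rewrite -wpart_comp => top0; apply/eqP; rewrite eqn_leq deg1_ge // andbT.
exact/deg1_le/wbounded_comp.
Qed.

End Composition.

Section ChainRule.
Variables (n : nat) (K : fieldType) (F : n.-tuple {mpoly K[n]}).
Implicit Types (A B Q : {mpoly K[n]}).

Definition chain_rule_at j Q :=
  (Q \mPo F)^`M(j) = \sum_(l < n) (Q^`M(l) \mPo F) * (tnth F l)^`M(j).

Lemma chain_rule_at0 j : chain_rule_at j 0.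
Proof.
rewrite /chain_rule_at comp_mpoly0 mderiv0 big1 // => l _.
by rewrite mderiv0 comp_mpoly0 mul0r.
Qed.

Lemma chain_rule_at1 j : chain_rule_at j 1.
Proof.
rewrite /chain_rule_at comp_mpoly1 -mpolyX0 mderivX mnm0E scale0r big1 // => l _.
by rewrite mderivX mnm0E scale0r comp_mpoly0 mul0r.
Qed.

Lemma chain_rule_atD j A B :
  chain_rule_at j A -> chain_rule_at j B -> chain_rule_at j (A + B).
Proof.
rewrite /chain_rule_at comp_mpolyD mderivD => -> ->; rewrite -big_split /=.
by apply: eq_bigr => l _; rewrite mderivD comp_mpolyD mulrDl.
Qed.

Lemma chain_rule_atZ j c A : chain_rule_at j A -> chain_rule_at j (c *: A).
Proof.
rewrite /chain_rule_at comp_mpolyZ mderivZ => ->; rewrite scaler_sumr.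
by apply: eq_bigr => l _; rewrite mderivZ comp_mpolyZ scalerAl.
Qed.

Lemma chain_rule_atM j A B :
  chain_rule_at j A -> chain_rule_at j B -> chain_rule_at j (A * B).
Proof.
rewrite /chain_rule_at rmorphM mderivM => -> ->.
rewrite mulr_suml mulr_sumr -big_split /=; apply: eq_bigr => l _.
rewrite mderivM comp_mpolyD !rmorphM.
have leibnizE (a a' b b' f : {mpoly K[n]}) :
  a * f * b + a' * (b' * f) = (a * b + a' * b') * f by ring.
exact: leibnizE.
Qed.

Lemma mderivXU (i j : 'I_n) : ('X_i : {mpoly K[n]})^`M(j) = (i == j)%:R.
Proof.
rewrite mderivX mnm1E; case: (i =P j) => [->|_]; last by rewrite scale0r.
have -> : (U_(j) - U_(j))%MM = 0%MM by apply/mnmP => k; rewrite mnmBE subnn mnm0E.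
by rewrite mpolyX0 scale1r.
Qed.

Lemma chain_rule_atX j l : chain_rule_at j 'X_l.
Proof.
rewrite /chain_rule_at comp_mpolyXU (bigD1 l) //= mderivXU eqxx comp_mpoly1 mul1r.
rewrite big1 ?addr0 -?tnth_nth // => l' /negbTE l'l.
by rewrite mderivXU eq_sym l'l comp_mpoly0 mul0r.
Qed.

Lemma mderiv_comp j Q :
  (Q \mPo F)^`M(j) = \sum_(l < n) (Q^`M(l) \mPo F) * (tnth F l)^`M(j).
Proof.
rewrite [Q]mpolyE; elim/big_ind: _ => [|A B|m _]; [exact: chain_rule_at0|exact: chain_rule_atD|].
apply: chain_rule_atZ; rewrite mpolyXE_id.
elim/big_ind: _ => [|A B|l _]; [exact: chain_rule_at1|exact: chain_rule_atM|].
elim: (m l) => [|e IH]; first by rewrite expr0; apply: chain_rule_at1.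
by rewrite exprS; apply: chain_rule_atM => //; apply: chain_rule_atX.
Qed.

End ChainRule.

Section Jacobian.
Variables (n : nat) (K : fieldType).

Definition jacobian (F : n.-tuple {mpoly K[n]}) : 'M[{mpoly K[n]}]_n :=
  \matrix_(i, j) (tnth F i)^`M(j).

Lemma det_jacobian_neq0 (F G : n.-tuple {mpoly K[n]}) :
  (forall i, tnth G i \mPo F = 'X_i) -> \det (jacobian F) != 0.
Proof.
move=> GF; have invJ : (\matrix_(i, l) ((tnth G i)^`M(l) \mPo F)) *m jacobian F = 1%:M.
  apply/matrixP => i j; rewrite !mxE.
  under eq_bigr do rewrite !mxE.
  by rewrite -mderiv_comp GF mderivXU.
apply/eqP => J0; have := congr1 determinant invJ.
by rewrite det_mulmx J0 mulr0 det1 => /eqP; rewrite eq_sym oner_eq0.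
Qed.

End Jacobian.

Lemma det_row0 (T : comNzRingType) m (A : 'M[T]_m) i :
  (forall j, A i j = 0) -> \det A = 0.
Proof. by move=> Ai0; rewrite (expand_det_row A i) big1 // => j _; rewrite Ai0 mul0r. Qed.

Lemma sum_predn (I : finType) (f : I -> nat) :
  (forall i, 0 < f i)%N -> (\sum_i (f i).-1 + #|I| = \sum_i f i)%N.
Proof.
move=> f_gt0; rewrite -sum1_card -big_split /=.
by apply: eq_bigr => i _; rewrite addn1 prednK.
Qed.

Section JacobianBound.
Variables (n : nat) (K : fieldType) (Phi Psi : n.+1.-tuple {mpoly K[n.+1]}).
Hypothesis PsiK : forall i, tnth Psi i \mPo Phi = 'X_i.
Local Notation d := (fun i : 'I_n.+1 => deg1 (tnth Phi i)).
Local Notation xn := (@ord_max n).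
Implicit Types (G Q : {mpoly K[n.+1]}).

Definition jacobian_lastrow G : 'M[{mpoly K[n.+1]}]_n.+1 :=
  \matrix_(i, j) if i == xn then G^`M(j) else (tnth Phi i)^`M(j).

Lemma deg1_tnth_gt0 i : (0 < d i)%N.
Proof.
rewrite lt0n; apply/negP => /eqP Phi_i_const; case/negP: (det_jacobian_neq0 PsiK).
by apply/eqP/(det_row0 (i := i)) => j; rewrite mxE mderiv_deg1_eq0.
Qed.

(* By the chain rule, replacing the last component of Phi by Q o Phi multiplies
   the Jacobian matrix on the left by a triangular matrix with diagonal
   (1, ..., 1, dQ/dx_n o Phi). *)
Lemma det_jacobian_lastrow_comp Q :
  \det (jacobian_lastrow (Q \mPo Phi)) = (Q^`M(xn) \mPo Phi) * \det (jacobian Phi).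
Proof.
set B := \matrix_(i, l) (if i == xn then Q^`M(l) \mPo Phi else (i == l)%:R)
  : 'M[{mpoly K[n.+1]}]_n.+1.
have -> : jacobian_lastrow (Q \mPo Phi) = B *m jacobian Phi.
  apply/matrixP => i j; rewrite !mxE; under eq_bigr do rewrite !mxE.
  case: (i == xn); first by rewrite mderiv_comp.
  rewrite (bigD1 i) //= eqxx mul1r big1 ?addr0 // => l /negbTE li.
  by rewrite eq_sym li mul0r.
rewrite det_mulmx det_trig; last first.
  apply/is_trig_mxP => i j ij; rewrite mxE ifF; first by case: eqP ij => [->|]; rewrite ?ltnn.
  by apply/eqP => ixn; move: ij; rewrite ixn /= ltnNge leq_ord.
rewrite (bigD1 xn) //= mxE eqxx big1 ?mulr1 // => i /negbTE ixn.
by rewrite mxE ixn eqxx.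
Qed.

Lemma wbounded_det_jacobian_lastrow G :
  wbounded w1 (\sum_i (if i == xn then deg1 G else d i).-1)
    (\det (jacobian_lastrow G)).
Proof.
have sign_bounded (b : bool) : wbounded w1 0 ((-1) ^+ b : {mpoly K[n.+1]}).
  by case: b; rewrite ?expr1 ?expr0; [apply/wboundedN/wbounded1|apply: wbounded1].
apply: wbounded_sum => s _; rewrite -[X in wbounded _ X]add0n.
apply: wboundedM; first exact: sign_bounded.
apply: wbounded_prod => i; rewrite mxE; case: (i == xn); exact: wbounded_deg1_mderiv.
Qed.

Lemma deg1_comp_gt0 Q : Q^`M(xn) \mPo Phi != 0 -> (0 < deg1 (Q \mPo Phi))%N.
Proof.
move=> dQ0; rewrite lt0n; apply/negP => /eqP QPhi_const.
have : \det (jacobian_lastrow (Q \mPo Phi)) = 0.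
  by apply: (det_row0 (i := xn)) => j; rewrite mxE eqxx mderiv_deg1_eq0.
rewrite det_jacobian_lastrow_comp => /eqP; rewrite mulf_eq0 (negbTE dQ0) /=.
exact/negP/det_jacobian_neq0.
Qed.

(* The determinant has degree at most sum_i (deg - 1) of its rows, and equals
   (dQ/dx_n o Phi) times the nonzero Jacobian determinant of Phi. *)
Lemma deg1_comp_mderiv Q : Q^`M(xn) \mPo Phi != 0 ->
  (deg1 (Q^`M(xn) \mPo Phi) + d xn + n.+1 <= deg1 (Q \mPo Phi) + \sum_i d i)%N.
Proof.
move=> dQ0; have := deg1_le (@wbounded_det_jacobian_lastrow (Q \mPo Phi)).
rewrite det_jacobian_lastrow_comp.
move=> /(leq_trans (deg1_mulr_ge _ (det_jacobian_neq0 PsiK))).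
rewrite -(leq_add2r n.+1) -[X in (_ <= _ + X)%N]card_ord sum_predn; last first.
  by move=> i; case: (i == xn); [apply: deg1_comp_gt0|apply: deg1_tnth_gt0].
rewrite (bigD1 xn) //= eqxx (eq_bigr d) => [|i /negbTE -> //].
rewrite [in X in _ -> X](bigD1 xn) //=; lia.
Qed.

Lemma deg1_comp_mderivn k Q : Q^`M(xn, k) \mPo Phi != 0 ->
  (deg1 (Q^`M(xn, k) \mPo Phi) + k * (d xn + n.+1) <=
   deg1 (Q \mPo Phi) + k * \sum_i d i)%N.
Proof.
elim: k => [|k IH]; first by rewrite mderivn0 !mul0n.
rewrite mderivnS => dQk0; have step := deg1_comp_mderiv dQk0.
have Qk0 : Q^`M(xn, k) \mPo Phi != 0.
  by apply: contraTneq (deg1_comp_gt0 dQk0) => ->; rewrite /deg1 msize0.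
by have := IH Qk0; rewrite !mulSn; lia.
Qed.

End JacobianBound.

Section PrincipalIdeal.
Variables (n : nat) (K : fieldType) (i : 'I_n).
Implicit Types (A B R S : {mpoly K[n]}).

Definition prime_pideal R :=
  forall A B, in_pideal R (A * B) -> in_pideal R A \/ in_pideal R B.

Lemma mderiv_exp R a : (R ^+ a.+1)^`M(i) = R ^+ a * R^`M(i) *+ a.+1.
Proof.
elim: a => [|a IH]; first by rewrite expr1 expr0 mul1r.
by rewrite exprS mderivM IH exprS [R^`M(i) * _]mulrC mulrnAr mulrA [RHS]mulrS.
Qed.

Lemma mderivn_exprM R S a j : exists2 c, c != 0%N & exists U,
  (R ^+ (a + j) * S)^`M(i, j) = R ^+ a * (R^`M(i) ^+ j * S *+ c + R * U).
Proof.
elim: j a => [|j IH] a.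
  by exists 1%N => //; exists 0; rewrite mderivn0 addn0 mulr0 addr0 expr0 mul1r.
have [c c0 [U defU]] := IH a.+1.
exists (c * a.+1)%N; first by rewrite muln_eq0 negb_or c0.
exists (R^`M(i) * U *+ a.+1 + (R^`M(i) ^+ j * S *+ c + R * U)^`M(i)).
rewrite mderivnS -addSnnS defU mderivM mderiv_exp.
move: (_ + R * U)^`M(i) => W.
rewrite mulrnA [R^`M(i) ^+ j.+1]exprS [R ^+ a.+1]exprSr.
ring.
Qed.

Lemma in_pidealMn R X c : [pchar K] =i pred0 -> c != 0%N ->
  in_pideal R (X *+ c) -> in_pideal R X.
Proof.
move=> char0 c0 [S defXc]; exists ((c%:R : K)^-1 *: S).
have c0K : (c%:R : K) != 0 by move/pcharf0P: char0 => ->.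
by rewrite -scalerAr -defXc -scaler_nat scalerA mulVf // scale1r.
Qed.

Lemma in_pidealDMr R X Y : in_pideal R (X + R * Y) -> in_pideal R X.
Proof. by move=> [S defS]; exists (S - Y); rewrite mulrBr -defS addrK. Qed.

Lemma prime_pideal_expM R A B k : prime_pideal R ->
  in_pideal R (A ^+ k * B) -> in_pideal R A \/ in_pideal R B.
Proof.
move=> primeR; elim: k => [|k IH]; first by rewrite expr0 mul1r; right.
by rewrite exprS -mulrA => /primeR [|/IH]; [left|].
Qed.

(* deg (dR/dx_i) < deg R, so R cannot divide its nonzero derivative. *)
Lemma mderiv_notin_pideal R : (1 < msize R)%N -> R^`M(i) != 0 -> ~ in_pideal R R^`M(i).
Proof.
move=> R_nconst dR0 [S defS].
have S0 : S != 0 by apply: contraNneq dR0 => S0; rewrite defS S0 mulr0.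
have R0 : R != 0 by apply: contraTneq R_nconst => ->; rewrite msize0.
have := msize_mderiv i R; rewrite defS msizeM //.
have : (0 < msize S)%N by rewrite lt0n msize_poly_eq0.
by move: (msize R) (msize S) R_nconst => r s; lia.
Qed.

Lemma mderivn_exprM_notin_pideal R S k : [pchar K] =i pred0 -> prime_pideal R ->
  (1 < msize R)%N -> R^`M(i) != 0 -> ~ in_pideal R S ->
  ~ in_pideal R (R ^+ k * S)^`M(i, k).
Proof.
move=> char0 primeR R_nconst dR0 S_notin.
have [c c0 [U]] := mderivn_exprM R S 0 k; rewrite add0n expr0 mul1r => ->.
move=> /in_pidealDMr /(in_pidealMn char0 c0) /(prime_pideal_expM primeR) [].
  exact: mderiv_notin_pideal.
exact: S_notin.
Qed.

Lemma prime_pideal_comp_kernel m (L : n.-tuple {mpoly K[m]}) R :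
  (forall Q, Q \mPo L = 0 <-> in_pideal R Q) -> prime_pideal R.
Proof.
move=> kerL A B /kerL; rewrite rmorphM => /eqP; rewrite mulf_eq0.
by case/orP => /eqP /kerL; [left|right].
Qed.

End PrincipalIdeal.

Theorem proposition1 (K : closedFieldType) (n : nat)
    (Phi : (n.+1).-tuple {mpoly K[n.+1]}) (R P : {mpoly K[n.+1]}) (k : nat) :
  [pchar K] =i pred0 ->
  poly_automorphism Phi ->
  let d := fun i : 'I_n.+1 => deg1 (tnth Phi i) in
  let nabla : int := (\sum_(i < n.+1) d i)%N%:Z - (n.+1)%:Z in
  (forall Q : {mpoly K[n.+1]},
     Q \mPo [tuple hbar (tnth Phi i) | i < n.+1] = 0 <-> in_pideal R Q) ->
  mirreducible R ->
  R^`M(ord_max) != 0 ->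
  P != 0 ->
  in_pideal (R ^+ k) (wtop d P) ->
  ~ in_pideal (R ^+ k.+1) (wtop d P) ->
  [/\ deg1 (P^`M(ord_max, k) \mPo Phi) = wdegp d (P^`M(ord_max, k))
        /\ (wdegp d (P^`M(ord_max, k)) : int) = (wdegp d P)%:Z - (k * d ord_max)%N%:Z,
      (deg1 (P \mPo Phi))%:Z >= (wdegp d P)%:Z - k%:Z * nabla
    & (deg1 (P \mPo Phi))%:Z >= k%:Z * ((wdegp d R)%:Z - nabla)].
Proof.
move=> char0 [Psi [_ PsiK]] d nabla kerPhibar [R_nconst _] dR0 P0 [S topP] topP_notin.
set Phibar := [tuple hbar (tnth Phi i) | i < n.+1] in kerPhibar *.
have S_notin : ~ in_pideal R S.
  by move=> [S' defS]; apply: topP_notin; exists S'; rewrite topP defS exprSr mulrA.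
have topPk_Phibar0 : (wtop d P)^`M(ord_max, k) \mPo Phibar != 0.
  apply/eqP => /kerPhibar; rewrite topP; apply: mderivn_exprM_notin_pideal => //.
  exact: prime_pideal_comp_kernel kerPhibar.
have topPk0 : (wtop d P)^`M(ord_max, k) != 0.
  by apply: contraNneq topPk_Phibar0 => ->; rewrite comp_mpoly0.
have [degPk topPk] := wtop_mderivn topPk0.
rewrite -topPk in topPk_Phibar0.
have degPkPhi := deg1_comp topPk_Phibar0.
have jacobian_bound := deg1_comp_mderivn PsiK (comp_mpoly_neq0 topPk_Phibar0).
have degR : (k * wdegp d R <= wdegp d P)%N.
  apply: leq_trans (wdegp_wtop_le d P).
  by apply: wdegp_in_pideal_exp (wtop_neq0 d P0) _; exists S.
have deg_ii : (wdegp d P + k * n.+1 <= deg1 (P \mPo Phi) + k * \sum_(i < n.+1) d i)%N.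
  by move: jacobian_bound; rewrite degPkPhi -degPk mulnDr addnA.
have ii : (wdegp d P)%:Z - k%:Z * nabla <= (deg1 (P \mPo Phi))%:Z.
  by rewrite /nabla mulrBr -!PoszM; lia.
split; [by split=> //; rewrite -degPk PoszD addrK|exact: ii|].
by move: ii; rewrite !mulrBr -PoszM; lia.
Qed.
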